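(* Let $\gamma:[0,l]\times[0,w)\to E_1^4$, $(s,t)\mapsto\gamma(s,t)$, be a smooth inextensible one-parameter family of partially null curves in $E_1^4$ parametrized by arclength, i.e. $\left\|\frac{\partial\gamma}{\partial s}\right\|\equiv1$, with Frenet frame $\{T,N,B_1,B_2\}$, curvatures $k_1,k_2$ (and $k_3\equiv0$), and write $$\frac{\partial\gamma}{\partial t}=\beta_1T+\beta_2N+\beta_3B_1+\beta_4B_2$$ with smooth scalar functions $\beta_i$. Put $\psi_1=\langle\frac{\partial N}{\partial t},B_1\rangle$, $\psi_2=\langle\frac{\partial N}{\partial t},B_2\rangle$, $\psi_3=\langle\frac{\partial B_1}{\partial t},B_2\rangle$. Then $$\frac{\partial T}{\partial t}=\Big(\frac{\partial\beta_2}{\partial s}+\beta_1k_1-\beta_4k_2\Big)N+\Big(\frac{\partial\beta_3}{\partial s}+\beta_2k_2\Big)B_1+\frac{\partial\beta_4}{\partial s}B_2,$$ $$\frac{\partial N}{\partial t}=-\Big(\frac{\partial\beta_2}{\partial s}+\beta_1k_1-\beta_4k_2\Big)T+\psi_2B_1+\psi_1B_2,$$ $$\frac{\partial B_1}{\partial t}=-\frac{\partial\beta_4}{\partial s}T-\psi_1N+\psi_3B_1,$$ $$\frac{\partial B_2}{\partial t}=-\Big(\frac{\partial\beta_3}{\partial s}+k_2\beta_2\Big)T-\psi_2N-\psi_3B_2.$$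
   Context: $E_1^4$ is $\mathbb{R}^4$ with the Lorentzian metric $\langle x,y\rangle=-x_1y_1+x_2y_2+x_3y_3+x_4y_4$ and $\|x\|=\sqrt{|\langle x,x\rangle|}$. A partially null curve is a spacelike curve whose first binormal is a null vector. For such a curve parametrized by arclength $s$, its Frenet frame $\{T,N,B_1,B_2\}$ ($T=\partial\gamma/\partial s$) satisfies $\langle T,T\rangle=\langle N,N\rangle=1$, $\langle B_1,B_1\rangle=\langle B_2,B_2\rangle=0$, $\langle B_1,B_2\rangle=1$, all other inner products zero, and the Frenet equations $T'=k_1N$, $N'=-k_1T+k_2B_1$, $B_1'=k_3B_1$, $B_2'=-k_2N-k_3B_2$, with $k_3\equiv0$. In the family, each $s\mapsto\gamma(s,t)$ is such a curve and frame and curvatures are smooth in $(s,t)$. The flow is inextensible if $\frac{\partial}{\partial t}\|\partial\gamma/\partial u\|=0$; with the arclength parametrization $\|\partial\gamma/\partial s\|\equiv1$ for all $t$. *)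

From Stdlib Require Import Reals List.
From Coquelicot Require Import Coquelicot.
Open Scope R_scope.

Record V4 := mkV4 { c1 : R; c2 : R; c3 : R; c4 : R }.

Definition vadd (x y : V4) : V4 :=
  mkV4 (c1 x + c1 y) (c2 x + c2 y) (c3 x + c3 y) (c4 x + c4 y).
Definition vscal (a : R) (x : V4) : V4 :=
  mkV4 (a * c1 x) (a * c2 x) (a * c3 x) (a * c4 x).

Definition linner (x y : V4) : R :=
  - c1 x * c1 y + c2 x * c2 y + c3 x * c3 y + c4 x * c4 y.
Definition lnorm (x : V4) : R := sqrt (Rabs (linner x x)).

Definition lc4 (a b c d : R) (X Y Z W : V4) : V4 :=
  vadd (vscal a X) (vadd (vscal b Y) (vadd (vscal c Z) (vscal d W))).

Definition ds (f : R -> R -> R) : R -> R -> R :=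
  fun s t => Derive (fun x => f x t) s.
Definition dt (f : R -> R -> R) : R -> R -> R :=
  fun s t => Derive (fun y => f s y) t.

Definition dsV (F : R -> R -> V4) : R -> R -> V4 :=
  fun s t => mkV4 (ds (fun a b => c1 (F a b)) s t) (ds (fun a b => c2 (F a b)) s t)
                  (ds (fun a b => c3 (F a b)) s t) (ds (fun a b => c4 (F a b)) s t).
Definition dtV (F : R -> R -> V4) : R -> R -> V4 :=
  fun s t => mkV4 (dt (fun a b => c1 (F a b)) s t) (dt (fun a b => c2 (F a b)) s t)
                  (dt (fun a b => c3 (F a b)) s t) (dt (fun a b => c4 (F a b)) s t).

Fixpoint pdn (l : list bool) (f : R -> R -> R) : R -> R -> R :=
  match l with
  | nil => f
  | b :: l' => if b then ds (pdn l' f) else dt (pdn l' f)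
  end.

Definition smooth_on (U : R * R -> Prop) (f : R -> R -> R) : Prop :=
  forall (l : list bool) (p : R * R), U p ->
    ex_derive (fun x => pdn l f x (snd p)) (fst p) /\
    ex_derive (fun y => pdn l f (fst p) y) (snd p) /\
    continuous (fun q : R * R => pdn l f (fst q) (snd q)) p.

Definition smoothV_on (U : R * R -> Prop) (F : R -> R -> V4) : Prop :=
  smooth_on U (fun s t => c1 (F s t)) /\ smooth_on U (fun s t => c2 (F s t)) /\
  smooth_on U (fun s t => c3 (F s t)) /\ smooth_on U (fun s t => c4 (F s t)).

From Pilot Require Import Defs.
From Stdlib Require Import Reals Lra List.
From Coquelicot Require Import Coquelicot.
Open Scope R_scope.
(* Coquelicot also exports a [c1]; restore the coordinate projection of [V4]. *)
Import Defs.

(* Since T = dgamma/ds, Schwarz's theorem gives dT/dt = d/ds (dgamma/dt); expanding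
   dgamma/dt in the frame and applying the Frenet equations expresses dT/dt in the frame.
   The Gram matrix of {T, N, B1, B2} does not depend on t, so the t-derivatives of the
   frame vectors are skew with respect to it.  A partially null frame is a basis (its Gram
   determinant is -1 = -det^2), hence each of these derivatives is determined by its inner
   products with the frame, which skewness expresses through dT/dt and psi1, psi2, psi3.
   The T-component of dT/dt vanishes already because <T,T> = 1.  Identities in s and t hold only on [0,l] and
   [0,w); this suffices to compare derivatives, every point of these intervals being a
   cluster point of them. *)

Lemma linner_sym (x y : V4) : linner x y = linner y x.
Proof. unfold linner; ring. Qed.

Lemma linner_lc4 (a b c d : R) (X Y Z W V : V4) :
  linner (lc4 a b c d X Y Z W) V =
  a * linner X V + b * linner Y V + c * linner Z V + d * linner W V.
Proof. destruct X, Y, Z, W, V; unfold lc4, vadd, vscal, linner; simpl; ring. Qed.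

Definition det3 (a b c d e f g h i : R) : R :=
  a * (e * i - f * h) - b * (d * i - f * g) + c * (d * h - e * g).

Definition det4 (a11 a12 a13 a14 a21 a22 a23 a24 a31 a32 a33 a34 a41 a42 a43 a44 : R) : R :=
  a11 * det3 a22 a23 a24 a32 a33 a34 a42 a43 a44
  - a12 * det3 a21 a23 a24 a31 a33 a34 a41 a43 a44
  + a13 * det3 a21 a22 a24 a31 a32 a34 a41 a42 a44
  - a14 * det3 a21 a22 a23 a31 a32 a33 a41 a42 a43.

Definition vdet (X Y Z W : V4) : R :=
  det4 (c1 X) (c2 X) (c3 X) (c4 X) (c1 Y) (c2 Y) (c3 Y) (c4 Y)
       (c1 Z) (c2 Z) (c3 Z) (c4 Z) (c1 W) (c2 W) (c3 W) (c4 W).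

(* The Gram matrix is F J F^T, with F the matrix of rows X, Y, Z, W and
   J = diag(-1,1,1,1). *)
Lemma gram_det (X Y Z W : V4) :
  det4 (linner X X) (linner X Y) (linner X Z) (linner X W)
       (linner Y X) (linner Y Y) (linner Y Z) (linner Y W)
       (linner Z X) (linner Z Y) (linner Z Z) (linner Z W)
       (linner W X) (linner W Y) (linner W Z) (linner W W)
  = - vdet X Y Z W ^ 2.
Proof. destruct X, Y, Z, W; unfold vdet, det4, det3, linner; simpl; ring. Qed.

(* Cramer's rule: [linner F v] is the product of the row F of the frame matrix with
   (- c1 v, c2 v, c3 v, c4 v). *)
Lemma vdet_cramer (X Y Z W v : V4) :
  - vdet X Y Z W * c1 v =
    det4 (linner X v) (c2 X) (c3 X) (c4 X) (linner Y v) (c2 Y) (c3 Y) (c4 Y)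
         (linner Z v) (c2 Z) (c3 Z) (c4 Z) (linner W v) (c2 W) (c3 W) (c4 W) /\
  vdet X Y Z W * c2 v =
    det4 (c1 X) (linner X v) (c3 X) (c4 X) (c1 Y) (linner Y v) (c3 Y) (c4 Y)
         (c1 Z) (linner Z v) (c3 Z) (c4 Z) (c1 W) (linner W v) (c3 W) (c4 W) /\
  vdet X Y Z W * c3 v =
    det4 (c1 X) (c2 X) (linner X v) (c4 X) (c1 Y) (c2 Y) (linner Y v) (c4 Y)
         (c1 Z) (c2 Z) (linner Z v) (c4 Z) (c1 W) (c2 W) (linner W v) (c4 W) /\
  vdet X Y Z W * c4 v =
    det4 (c1 X) (c2 X) (c3 X) (linner X v) (c1 Y) (c2 Y) (c3 Y) (linner Y v)
         (c1 Z) (c2 Z) (c3 Z) (linner Z v) (c1 W) (c2 W) (c3 W) (linner W v).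
Proof.
  destruct X, Y, Z, W, v; unfold vdet, det4, det3, linner; simpl.
  repeat split; ring.
Qed.

Lemma vdet_linner_inj (X Y Z W u v : V4) :
  vdet X Y Z W <> 0 ->
  linner X u = linner X v -> linner Y u = linner Y v ->
  linner Z u = linner Z v -> linner W u = linner W v -> u = v.
Proof.
  intros HD HX HY HZ HW.
  set (e := vadd u (vscal (-1) v)).
  assert (He : forall F, linner F e = linner F u - linner F v).
  { intro F; unfold e; destruct F, u, v; unfold linner, vadd, vscal; simpl; ring. }
  destruct (vdet_cramer X Y Z W e) as (E1 & E2 & E3 & E4).
  rewrite !He, HX, HY, HZ, HW, !Rminus_diag in E1, E2, E3, E4.
  unfold det4, det3 in E1, E2, E3, E4; ring_simplify in E1; ring_simplify in E2;
    ring_simplify in E3; ring_simplify in E4.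
  apply Rmult_integral in E2, E3, E4.
  assert (E1' : vdet X Y Z W * c1 e = 0) by lra; apply Rmult_integral in E1'.
  destruct u, v; unfold e in *; simpl in *.
  f_equal; lra.
Qed.

(* Conjuncts in the order of the frame hypothesis of [lemma3p5], which is thus reused
   by conversion. *)
Definition pnull_frame (T N B1 B2 : V4) : Prop :=
  linner T T = 1 /\ linner N N = 1 /\ linner B1 B1 = 0 /\ linner B2 B2 = 0 /\
  linner B1 B2 = 1 /\ linner T N = 0 /\ linner T B1 = 0 /\ linner T B2 = 0 /\
  linner N B1 = 0 /\ linner N B2 = 0.

Lemma pnull_frame_vdet_neq0 (T N B1 B2 : V4) :
  pnull_frame T N B1 B2 -> vdet T N B1 B2 <> 0.
Proof.
  intros (HTT & HNN & HB11 & HB22 & HB12 & HTN & HTB1 & HTB2 & HNB1 & HNB2) HD.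
  pose proof (gram_det T N B1 B2) as E.
  rewrite (linner_sym N T), (linner_sym B1 T), (linner_sym B2 T), (linner_sym B1 N),
    (linner_sym B2 N), (linner_sym B2 B1), HTT, HNN, HB11, HB22, HB12, HTN, HTB1, HTB2,
    HNB1, HNB2, HD in E.
  unfold det4, det3 in E; lra.
Qed.

Lemma pnull_frame_linner_lc4 (T N B1 B2 : V4) (a b c d : R) :
  pnull_frame T N B1 B2 ->
  linner (lc4 a b c d T N B1 B2) T = a /\ linner (lc4 a b c d T N B1 B2) N = b /\
  linner (lc4 a b c d T N B1 B2) B1 = d /\ linner (lc4 a b c d T N B1 B2) B2 = c.
Proof.
  intros (HTT & HNN & HB11 & HB22 & HB12 & HTN & HTB1 & HTB2 & HNB1 & HNB2).
  rewrite !linner_lc4, (linner_sym N T), (linner_sym B1 T), (linner_sym B2 T),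
    (linner_sym B1 N), (linner_sym B2 N), (linner_sym B2 B1),
    HTT, HNN, HB11, HB22, HB12, HTN, HTB1, HTB2, HNB1, HNB2.
  repeat split; ring.
Qed.

Lemma pnull_frame_decomp (T N B1 B2 X : V4) :
  pnull_frame T N B1 B2 ->
  X = lc4 (linner X T) (linner X N) (linner X B2) (linner X B1) T N B1 B2.
Proof.
  intros Hfr.
  destruct (pnull_frame_linner_lc4 T N B1 B2 (linner X T) (linner X N) (linner X B2)
              (linner X B1) Hfr) as (ET & EN & EB1 & EB2).
  apply (vdet_linner_inj T N B1 B2); [exact (pnull_frame_vdet_neq0 _ _ _ _ Hfr)| | | |];
    rewrite linner_sym, (linner_sym _ (lc4 _ _ _ _ _ _ _ _)); auto.
Qed.

Definition gram_stationary (T N B1 B2 dT dN dB1 dB2 : V4) : Prop :=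
  linner dT T + linner T dT = 0 /\ linner dN N + linner N dN = 0 /\
  linner dB1 B1 + linner B1 dB1 = 0 /\ linner dB2 B2 + linner B2 dB2 = 0 /\
  linner dB1 B2 + linner B1 dB2 = 0 /\ linner dT N + linner T dN = 0 /\
  linner dT B1 + linner T dB1 = 0 /\ linner dT B2 + linner T dB2 = 0 /\
  linner dN B1 + linner N dB1 = 0 /\ linner dN B2 + linner N dB2 = 0.

Lemma pnull_frame_variation (T N B1 B2 dT dN dB1 dB2 : V4) (a b c d : R) :
  pnull_frame T N B1 B2 -> gram_stationary T N B1 B2 dT dN dB1 dB2 ->
  dT = lc4 a b c d T N B1 B2 ->
  a = 0 /\
  dN = lc4 (- b) 0 (linner dN B2) (linner dN B1) T N B1 B2 /\
  dB1 = lc4 (- d) (- linner dN B1) (linner dB1 B2) 0 T N B1 B2 /\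
  dB2 = lc4 (- c) (- linner dN B2) 0 (- linner dB1 B2) T N B1 B2.
Proof.
  intros Hfr (STT & SNN & SB11 & SB22 & SB12 & STN & STB1 & STB2 & SNB1 & SNB2) HdT.
  destruct (pnull_frame_linner_lc4 T N B1 B2 a b c d Hfr) as (ET & EN & EB1 & EB2).
  rewrite <- HdT in ET, EN, EB1, EB2.
  rewrite (linner_sym T dT), ET in STT.
  rewrite (linner_sym T dN), EN in STN.
  rewrite (linner_sym T dB1), EB1 in STB1.
  rewrite (linner_sym T dB2), EB2 in STB2.
  rewrite (linner_sym N dN) in SNN; rewrite (linner_sym B1 dB1) in SB11;
    rewrite (linner_sym B2 dB2) in SB22; rewrite (linner_sym B1 dB2) in SB12;
    rewrite (linner_sym N dB1) in SNB1; rewrite (linner_sym N dB2) in SNB2.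
  split; [lra|].
  split; [|split]; [rewrite (pnull_frame_decomp T N B1 B2 dN Hfr) at 1
                   | rewrite (pnull_frame_decomp T N B1 B2 dB1 Hfr) at 1
                   | rewrite (pnull_frame_decomp T N B1 B2 dB2 Hfr) at 1];
    f_equal; lra.
Qed.

Definition cluster_point (D : R -> Prop) (x : R) : Prop :=
  forall d, 0 < d -> exists h, h <> 0 /\ Rabs h < d /\ D (x + h).

Lemma cluster_point_Icc (a b x : R) :
  a < b -> a <= x <= b -> cluster_point (fun y => a <= y <= b) x.
Proof.
  intros Hab Hx d Hd.
  set (h := Rmin (d / 2) ((b - a) / 2)).
  assert (h_pos : 0 < h) by (apply Rmin_glb_lt; lra).
  assert (h_le : h <= d / 2 /\ h <= (b - a) / 2) by (split; [apply Rmin_l | apply Rmin_r]).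
  destruct (Rle_lt_dec x ((a + b) / 2)).
  - exists h; rewrite Rabs_pos_eq by lra; repeat split; lra.
  - exists (- h); rewrite Rabs_Ropp, Rabs_pos_eq by lra; repeat split; lra.
Qed.

Lemma cluster_point_Ico (a b x : R) :
  a <= x < b -> cluster_point (fun y => a <= y < b) x.
Proof.
  intros Hx d Hd.
  set (h := Rmin (d / 2) ((b - x) / 2)).
  assert (h_pos : 0 < h) by (apply Rmin_glb_lt; lra).
  assert (h_le : h <= d / 2 /\ h <= (b - x) / 2) by (split; [apply Rmin_l | apply Rmin_r]).
  exists h; rewrite Rabs_pos_eq by lra; repeat split; lra.
Qed.

Lemma Derive_ext_cluster (f g : R -> R) (D : R -> Prop) (x : R) :
  ex_derive f x -> ex_derive g x -> D x -> cluster_point D x ->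
  (forall y, D y -> f y = g y) -> Derive f x = Derive g x.
Proof.
  intros [df Hf] [dg Hg] Dx Hcl Hfg.
  rewrite (is_derive_unique f x df Hf), (is_derive_unique g x dg Hg).
  destruct (Req_dec df dg) as [E | Hneq]; [exact E | exfalso].
  assert (Hne : df - dg <> 0) by (intro E; apply Hneq; lra).
  assert (Hlim : derivable_pt_lim (fun y => f y - g y) x (df - dg))
    by exact (proj1 (is_derive_Reals _ _ _) (is_derive_minus f g x df dg Hf Hg)).
  assert (eps_pos : 0 < Rabs (df - dg) / 2) by (apply Rabs_pos_lt in Hne; lra).
  destruct (Hlim _ eps_pos) as [delta Hdelta].
  destruct (Hcl delta (cond_pos delta)) as (h & Hh0 & Hh & Dxh).
  specialize (Hdelta h Hh0 Hh).
  rewrite (Hfg x Dx), (Hfg (x + h) Dxh) in Hdelta.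
  replace ((g (x + h) - g (x + h) - (g x - g x)) / h - (df - dg)) with (- (df - dg))
    in Hdelta by (field; exact Hh0).
  rewrite Rabs_Ropp in Hdelta; lra.
Qed.

Definition ex_deriveV (X : R -> V4) (x : R) : Prop :=
  ex_derive (fun y => c1 (X y)) x /\ ex_derive (fun y => c2 (X y)) x /\
  ex_derive (fun y => c3 (X y)) x /\ ex_derive (fun y => c4 (X y)) x.

(* [dsV F s t] and [dtV F s t] are convertible to [DeriveV] of the partial curves. *)
Definition DeriveV (X : R -> V4) (x : R) : V4 :=
  mkV4 (Derive (fun y => c1 (X y)) x) (Derive (fun y => c2 (X y)) x)
       (Derive (fun y => c3 (X y)) x) (Derive (fun y => c4 (X y)) x).

Lemma DeriveV_ext_cluster (X Y : R -> V4) (D : R -> Prop) (x : R) :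
  ex_deriveV X x -> ex_deriveV Y x -> D x -> cluster_point D x ->
  (forall y, D y -> X y = Y y) -> DeriveV X x = DeriveV Y x.
Proof.
  intros (X1 & X2 & X3 & X4) (Y1 & Y2 & Y3 & Y4) Dx Hcl HXY.
  unfold DeriveV; f_equal; apply (Derive_ext_cluster _ _ D); auto;
    intros y Dy; rewrite (HXY y Dy); reflexivity.
Qed.

Lemma is_derive_lorentz_form (f1 f2 f3 f4 g1 g2 g3 g4 : R -> R) (x : R) :
  ex_derive f1 x -> ex_derive f2 x -> ex_derive f3 x -> ex_derive f4 x ->
  ex_derive g1 x -> ex_derive g2 x -> ex_derive g3 x -> ex_derive g4 x ->
  is_derive (fun y => - f1 y * g1 y + f2 y * g2 y + f3 y * g3 y + f4 y * g4 y) x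
    (- Derive f1 x * g1 x + Derive f2 x * g2 x + Derive f3 x * g3 x + Derive f4 x * g4 x
     + (- f1 x * Derive g1 x + f2 x * Derive g2 x + f3 x * Derive g3 x
        + f4 x * Derive g4 x)).
Proof.
  intros; auto_derive; [repeat split; assumption|].
  (* [auto_derive] reports derivatives of eta-expanded functions. *)
  repeat match goal with |- context [fun y : R => ?f y] => change (fun y : R => f y) with f end.
  ring.
Qed.

Lemma is_derive_linner (X Y : R -> V4) (x : R) :
  ex_deriveV X x -> ex_deriveV Y x ->
  is_derive (fun y => linner (X y) (Y y)) x
    (linner (DeriveV X x) (Y x) + linner (X x) (DeriveV Y x)).
Proof.
  intros (X1 & X2 & X3 & X4) (Y1 & Y2 & Y3 & Y4).
  exact (is_derive_lorentz_form _ _ _ _ _ _ _ _ x X1 X2 X3 X4 Y1 Y2 Y3 Y4).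
Qed.

Lemma linner_deriv_eq0 (X Y : R -> V4) (D : R -> Prop) (x c : R) :
  ex_deriveV X x -> ex_deriveV Y x -> D x -> cluster_point D x ->
  (forall y, D y -> linner (X y) (Y y) = c) ->
  linner (DeriveV X x) (Y x) + linner (X x) (DeriveV Y x) = 0.
Proof.
  intros HX HY Dx Hcl Hc.
  pose proof (is_derive_linner X Y x HX HY) as Hd.
  rewrite <- (is_derive_unique _ _ _ Hd), <- (Derive_const c x).
  apply (Derive_ext_cluster _ _ D); auto.
  - exact (ex_intro _ _ Hd).
  - apply ex_derive_const.
Qed.

Lemma pnull_frame_gram_stationary (T N B1 B2 : R -> V4) (D : R -> Prop) (x : R) :
  ex_deriveV T x -> ex_deriveV N x -> ex_deriveV B1 x -> ex_deriveV B2 x ->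
  D x -> cluster_point D x ->
  (forall y, D y -> pnull_frame (T y) (N y) (B1 y) (B2 y)) ->
  gram_stationary (T x) (N x) (B1 x) (B2 x)
    (DeriveV T x) (DeriveV N x) (DeriveV B1 x) (DeriveV B2 x).
Proof.
  intros HT HN HB1 HB2 Dx Hcl Hfr.
  repeat split; eapply (linner_deriv_eq0 _ _ D); eauto;
    intros y Dy; destruct (Hfr y Dy) as (? & ? & ? & ? & ? & ? & ? & ? & ? & ?); eassumption.
Qed.

Lemma is_derive_lin4 (a b c d f g h k : R -> R) (x : R) :
  ex_derive a x -> ex_derive b x -> ex_derive c x -> ex_derive d x ->
  ex_derive f x -> ex_derive g x -> ex_derive h x -> ex_derive k x ->
  is_derive (fun y => a y * f y + (b y * g y + (c y * h y + d y * k y))) x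
    (Derive a x * f x + (Derive b x * g x + (Derive c x * h x + Derive d x * k x))
     + (a x * Derive f x + (b x * Derive g x + (c x * Derive h x + d x * Derive k x)))).
Proof.
  intros; auto_derive; [repeat split; assumption|].
  repeat match goal with |- context [fun y : R => ?f y] => change (fun y : R => f y) with f end.
  ring.
Qed.

Lemma DeriveV_lc4 (a b c d : R -> R) (X Y Z W : R -> V4) (x : R) :
  ex_derive a x -> ex_derive b x -> ex_derive c x -> ex_derive d x ->
  ex_deriveV X x -> ex_deriveV Y x -> ex_deriveV Z x -> ex_deriveV W x ->
  ex_deriveV (fun y => lc4 (a y) (b y) (c y) (d y) (X y) (Y y) (Z y) (W y)) x /\
  DeriveV (fun y => lc4 (a y) (b y) (c y) (d y) (X y) (Y y) (Z y) (W y)) x =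
  vadd (lc4 (Derive a x) (Derive b x) (Derive c x) (Derive d x) (X x) (Y x) (Z x) (W x))
       (lc4 (a x) (b x) (c x) (d x)
            (DeriveV X x) (DeriveV Y x) (DeriveV Z x) (DeriveV W x)).
Proof.
  intros Ha Hb Hc Hd (X1 & X2 & X3 & X4) (Y1 & Y2 & Y3 & Y4) (Z1 & Z2 & Z3 & Z4)
    (W1 & W2 & W3 & W4).
  pose proof (is_derive_lin4 _ _ _ _ _ _ _ _ x Ha Hb Hc Hd X1 Y1 Z1 W1) as D1.
  pose proof (is_derive_lin4 _ _ _ _ _ _ _ _ x Ha Hb Hc Hd X2 Y2 Z2 W2) as D2.
  pose proof (is_derive_lin4 _ _ _ _ _ _ _ _ x Ha Hb Hc Hd X3 Y3 Z3 W3) as D3.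
  pose proof (is_derive_lin4 _ _ _ _ _ _ _ _ x Ha Hb Hc Hd X4 Y4 Z4 W4) as D4.
  split.
  - repeat split; eexists; eassumption.
  - unfold DeriveV, lc4, vadd, vscal; simpl.
    f_equal; apply is_derive_unique; assumption.
Qed.

Lemma smooth_on_ex_derive_s (U : R * R -> Prop) (f : R -> R -> R) (l : list bool) (s t : R) :
  smooth_on U f -> U (s, t) -> ex_derive (fun x => pdn l f x t) s.
Proof. intros Hf HU; exact (proj1 (Hf l (s, t) HU)). Qed.

Lemma smooth_on_ex_derive_t (U : R * R -> Prop) (f : R -> R -> R) (l : list bool) (s t : R) :
  smooth_on U f -> U (s, t) -> ex_derive (fun y => pdn l f s y) t.
Proof. intros Hf HU; exact (proj1 (proj2 (Hf l (s, t) HU))). Qed.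

Section SmoothCurves.

Variables (U : R * R -> Prop) (F : R -> R -> V4) (s t : R).
Hypotheses (HF : smoothV_on U F) (HU : U (s, t)).

Local Ltac by_components tac :=
  destruct HF as (F1 & F2 & F3 & F4); repeat split; [tac F1 | tac F2 | tac F3 | tac F4].

Lemma smoothV_ex_deriveV_s : ex_deriveV (fun x => F x t) s.
Proof. by_components ltac:(fun Fi => exact (smooth_on_ex_derive_s U _ nil s t Fi HU)). Qed.

Lemma smoothV_ex_deriveV_t : ex_deriveV (fun y => F s y) t.
Proof. by_components ltac:(fun Fi => exact (smooth_on_ex_derive_t U _ nil s t Fi HU)). Qed.

Lemma smoothV_ex_deriveV_dtV_s : ex_deriveV (fun x => dtV F x t) s.
Proof.
  by_components ltac:(fun Fi => exact (smooth_on_ex_derive_s U _ (false :: nil) s t Fi HU)).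
Qed.

Lemma smoothV_ex_deriveV_dsV_t : ex_deriveV (fun y => dsV F s y) t.
Proof.
  by_components ltac:(fun Fi => exact (smooth_on_ex_derive_t U _ (true :: nil) s t Fi HU)).
Qed.

End SmoothCurves.

Lemma dt_ds_comm (U : R * R -> Prop) (f : R -> R -> R) (s t : R) :
  open U -> smooth_on U f -> U (s, t) -> dt (ds f) s t = ds (dt f) s t.
Proof.
  intros HO Hf HU.
  assert (HUloc : locally_2d (fun u v => U (u, v)) s t).
  { apply locally_2d_locally; eapply filter_imp; [|exact (HO _ HU)].
    intros [u v]; auto. }
  symmetry; apply Schwarz.
  - eapply locally_2d_impl; [|exact HUloc]; apply locally_2d_forall.
    intros u v Huv; repeat split.
    + exact (smooth_on_ex_derive_s U f nil u v Hf Huv).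
    + exact (smooth_on_ex_derive_t U f nil u v Hf Huv).
    + exact (smooth_on_ex_derive_s U f (false :: nil) u v Hf Huv).
    + exact (smooth_on_ex_derive_t U f (true :: nil) u v Hf Huv).
  - apply continuity_2d_pt_filterlim; exact (proj2 (proj2 (Hf (true :: false :: nil) (s, t) HU))).
  - apply continuity_2d_pt_filterlim; exact (proj2 (proj2 (Hf (false :: true :: nil) (s, t) HU))).
Qed.

Lemma dtV_dsV_comm (U : R * R -> Prop) (F : R -> R -> V4) (s t : R) :
  open U -> smoothV_on U F -> U (s, t) -> dtV (dsV F) s t = dsV (dtV F) s t.
Proof.
  intros HO (F1 & F2 & F3 & F4) HU; unfold dtV, dsV; f_equal;
    [exact (dt_ds_comm U _ s t HO F1 HU) | exact (dt_ds_comm U _ s t HO F2 HU)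
    | exact (dt_ds_comm U _ s t HO F3 HU) | exact (dt_ds_comm U _ s t HO F4 HU)].
Qed.

Lemma frenet_dtV_tangent (U : R * R -> Prop) (Ds Dt : R -> Prop)
  (gamma T N B1 B2 : R -> R -> V4) (k1 k2 k3 b1 b2 b3 b4 : R -> R -> R) (s t : R) :
  open U -> U (s, t) ->
  smoothV_on U gamma -> smoothV_on U T -> smoothV_on U N ->
  smoothV_on U B1 -> smoothV_on U B2 ->
  smooth_on U b1 -> smooth_on U b2 -> smooth_on U b3 -> smooth_on U b4 ->
  Ds s -> cluster_point Ds s -> Dt t -> cluster_point Dt t ->
  (forall y, Dt y -> T s y = dsV gamma s y) ->
  (forall x, Ds x ->
     dtV gamma x t = lc4 (b1 x t) (b2 x t) (b3 x t) (b4 x t) (T x t) (N x t) (B1 x t) (B2 x t)) ->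
  dsV T s t = vscal (k1 s t) (N s t) ->
  dsV N s t = vadd (vscal (- k1 s t) (T s t)) (vscal (k2 s t) (B1 s t)) ->
  dsV B1 s t = vscal (k3 s t) (B1 s t) ->
  dsV B2 s t = vadd (vscal (- k2 s t) (N s t)) (vscal (- k3 s t) (B2 s t)) ->
  dtV T s t =
    lc4 (ds b1 s t - b2 s t * k1 s t) (ds b2 s t + b1 s t * k1 s t - b4 s t * k2 s t)
        (ds b3 s t + b2 s t * k2 s t + b3 s t * k3 s t) (ds b4 s t - b4 s t * k3 s t)
        (T s t) (N s t) (B1 s t) (B2 s t).
Proof.
  intros HO HU Hg HT HN HB1 HB2 Hb1 Hb2 Hb3 Hb4 Dss Hcl_s Dtt Hcl_t HTg Hvar
    FT FN FB1 FB2.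
  assert (Hcoef : forall b, smooth_on U b -> ex_derive (fun x => b x t) s)
    by (intros b Hb; exact (smooth_on_ex_derive_s U b nil s t Hb HU)).
  destruct (DeriveV_lc4 (fun x => b1 x t) (fun x => b2 x t) (fun x => b3 x t) (fun x => b4 x t)
              (fun x => T x t) (fun x => N x t) (fun x => B1 x t) (fun x => B2 x t) s
              (Hcoef b1 Hb1) (Hcoef b2 Hb2) (Hcoef b3 Hb3) (Hcoef b4 Hb4)
              (smoothV_ex_deriveV_s U T s t HT HU) (smoothV_ex_deriveV_s U N s t HN HU)
              (smoothV_ex_deriveV_s U B1 s t HB1 HU) (smoothV_ex_deriveV_s U B2 s t HB2 HU))
    as [Hex_lc Hd_lc].
  assert (E_t : dtV T s t = dtV (dsV gamma) s t).
  { apply (DeriveV_ext_cluster (fun y => T s y) (fun y => dsV gamma s y) Dt t); auto.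
    - exact (smoothV_ex_deriveV_t U T s t HT HU).
    - exact (smoothV_ex_deriveV_dsV_t U gamma s t Hg HU). }
  assert (E_s : dsV (dtV gamma) s t =
      DeriveV (fun x => lc4 (b1 x t) (b2 x t) (b3 x t) (b4 x t)
                            (T x t) (N x t) (B1 x t) (B2 x t)) s).
  { apply (DeriveV_ext_cluster (fun x => dtV gamma x t) _ Ds s); auto.
    exact (smoothV_ex_deriveV_dtV_s U gamma s t Hg HU). }
  rewrite E_t, (dtV_dsV_comm U gamma s t HO Hg HU), E_s, Hd_lc.
  change (DeriveV (fun x => T x t) s) with (dsV T s t).
  change (DeriveV (fun x => N x t) s) with (dsV N s t).
  change (DeriveV (fun x => B1 x t) s) with (dsV B1 s t).
  change (DeriveV (fun x => B2 x t) s) with (dsV B2 s t).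
  rewrite FT, FN, FB1, FB2.
  unfold lc4, vadd, vscal, ds; simpl; f_equal; ring.
Qed.

Theorem lemma3p5
  (l w : R) (Hl : 0 < l) (Hw : 0 < w)
  (U : R * R -> Prop) (HUopen : open U)
  (HDU : forall s t, 0 <= s <= l -> 0 <= t < w -> U (s, t))
  (gamma T N B1 B2 : R -> R -> V4)
  (k1 k2 k3 beta1 beta2 beta3 beta4 : R -> R -> R)
  (Hsg : smoothV_on U gamma) (HsT : smoothV_on U T) (HsN : smoothV_on U N)
  (HsB1 : smoothV_on U B1) (HsB2 : smoothV_on U B2)
  (Hsk1 : smooth_on U k1) (Hsk2 : smooth_on U k2) (Hsk3 : smooth_on U k3)
  (Hsb1 : smooth_on U beta1) (Hsb2 : smooth_on U beta2)
  (Hsb3 : smooth_on U beta3) (Hsb4 : smooth_on U beta4)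
  (Hframe : forall s t, 0 <= s <= l -> 0 <= t < w ->
     (T s t = dsV gamma s t /\
         linner (T s t) (T s t) = 1 /\ linner (N s t) (N s t) = 1/\
         linner (B1 s t) (B1 s t) = 0 /\ linner (B2 s t) (B2 s t) = 0/\
         linner (B1 s t) (B2 s t) = 1/\
         linner (T s t) (N s t) = 0 /\ linner (T s t) (B1 s t) = 0/\
         linner (T s t) (B2 s t) = 0 /\ linner (N s t) (B1 s t) = 0 /\
         linner (N s t) (B2 s t) = 0))
  (Hfrenet : forall s t, 0 <= s <= l -> 0 <= t < w ->
     (dsV T s t = vscal (k1 s t) (N s t) /\
         dsV N s t = vadd (vscal (- k1 s t) (T s t)) (vscal (k2 s t) (B1 s t)) /\
         dsV B1 s t = vscal (k3 s t) (B1 s t) /\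
         dsV B2 s t = vadd (vscal (- k2 s t) (N s t)) (vscal (- k3 s t) (B2 s t)) /\
         k3 s t = 0))
  (Harc : forall s t, 0 <= s <= l -> 0 <= t < w -> lnorm (dsV gamma s t) = 1)
  (Hinext : forall s t, 0 <= s <= l -> 0 <= t < w ->
     dt (fun a b => lnorm (dsV gamma a b)) s t = 0)
  (Hvar : forall s t, 0 <= s <= l -> 0 <= t < w ->
     dtV gamma s t =
       lc4 (beta1 s t) (beta2 s t) (beta3 s t) (beta4 s t)
           (T s t) (N s t) (B1 s t) (B2 s t)) :
  let psi1 := fun s t => linner (dtV N s t) (B1 s t) in
  let psi2 := fun s t => linner (dtV N s t) (B2 s t) in
  let psi3 := fun s t => linner (dtV B1 s t) (B2 s t) in
  forall s t, 0 <= s <= l -> 0 <= t < w ->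
    (dtV T s t =
          lc4 0 (ds beta2 s t + beta1 s t * k1 s t - beta4 s t * k2 s t)
                (ds beta3 s t + beta2 s t * k2 s t) (ds beta4 s t)
              (T s t) (N s t) (B1 s t) (B2 s t) /\
        dtV N s t =
          lc4 (- (ds beta2 s t + beta1 s t * k1 s t - beta4 s t * k2 s t)) 0
              (psi2 s t) (psi1 s t)
              (T s t) (N s t) (B1 s t) (B2 s t) /\
        dtV B1 s t =
          lc4 (- ds beta4 s t) (- psi1 s t) (psi3 s t) 0
              (T s t) (N s t) (B1 s t) (B2 s t) /\
        dtV B2 s t =
          lc4 (- (ds beta3 s t + k2 s t * beta2 s t)) (- psi2 s t) 0 (- psi3 s t)
              (T s t) (N s t) (B1 s t) (B2 s t)).
Proof.
  intros psi1 psi2 psi3 s t Hs Ht.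
  pose proof (HDU s t Hs Ht) as HU.
  pose proof (cluster_point_Icc 0 l s Hl Hs) as Hcl_s.
  pose proof (cluster_point_Ico 0 w t Ht) as Hcl_t.
  destruct (Hfrenet s t Hs Ht) as (FT & FN & FB1 & FB2 & Hk3).
  pose proof (frenet_dtV_tangent U _ _ gamma T N B1 B2 k1 k2 k3 beta1 beta2 beta3 beta4 s t
    HUopen HU Hsg HsT HsN HsB1 HsB2 Hsb1 Hsb2 Hsb3 Hsb4 Hs Hcl_s Ht Hcl_t
    (fun y Hy => proj1 (Hframe s y Hs Hy)) (fun x Hx => Hvar x t Hx Ht) FT FN FB1 FB2) as HdT.
  rewrite Hk3, !Rmult_0_r, Rplus_0_r, Rminus_0_r in HdT.
  pose proof (pnull_frame_gram_stationary (fun y => T s y) (fun y => N s y) (fun y => B1 s y)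
    (fun y => B2 s y) _ t (smoothV_ex_deriveV_t U T s t HsT HU)
    (smoothV_ex_deriveV_t U N s t HsN HU) (smoothV_ex_deriveV_t U B1 s t HsB1 HU)
    (smoothV_ex_deriveV_t U B2 s t HsB2 HU) Ht Hcl_t
    (fun y Hy => proj2 (Hframe s y Hs Hy))) as Hstat.
  destruct (pnull_frame_variation _ _ _ _ _ _ _ _ _ _ _ _
              (proj2 (Hframe s t Hs Ht)) Hstat HdT) as (Ha & HdN & HdB1 & HdB2).
  rewrite Ha in HdT; rewrite (Rmult_comm (beta2 s t)) in HdB2.
  repeat split; assumption.
Qed.
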